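(* Let $\varphi\in L^\infty(\mathbb{T})$, let $C$ be a conjugation on $H^2(\mathbb{D})$, and let $S=CM_zC$. If $T_\varphi$ is $C$-symmetric, then $T_\varphi$ is $S$-Toeplitz, i.e. $S^*T_\varphi S=T_\varphi$.
   Context: A conjugation is an anti-linear, involutive ($C^2=I$), isometric map; $T$ is $C$-symmetric if $CT^*C=T$. $H^2(\mathbb{D})$ is the Hardy space of the unit disc (as a closed subspace of $L^2(\mathbb{T})$), $M_z$ is multiplication by $z$ on it, and for $\varphi\in L^\infty(\mathbb{T})$, $T_\varphi f=P_{H^2(\mathbb{D})}(\varphi f)$. *)

From mathcomp Require Import all_boot all_algebra.
From mathcomp Require Import all_classical all_reals all_analysis.
From mathcomp Require Import complex.
Import GRing.Theory Num.Theory.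
Import numFieldNormedType.Exports.

Set Implicit Arguments.
Unset Strict Implicit.
Unset Printing Implicit Defensive.

Local Open Scope ring_scope.
Local Open Scope classical_set_scope.

Section Hardy.
Variable R : realType.

Definition re (z : R[i]) : R := complex.Re z.
Definition im (z : R[i]) : R := complex.Im z.

Definition cnormsq (z : R[i]) : R := re z ^+ 2 + im z ^+ 2.

Definition csum (u : nat -> R[i]) : R[i] :=
  Complex (limn (series (fun n => re (u n))))
          (limn (series (fun n => im (u n)))).

(* Model of H^2(D): a function f in H^2 is identified with the sequence
   (hat f(n))_{n >= 0} of its Fourier coefficients (the unitary Fourier
   isomorphism H^2 ~ l^2(N)). *)
Definition inH2 (f : nat -> R[i]) : Prop :=
  cvgn (series (fun n => cnormsq (f n) : R)).

Definition inner (f g : nat -> R[i]) : R[i] := csum (fun n => f n * (g n)^*).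

(* The unit circle T is parametrized by t in [0, 2pi]; normalized
   Lebesgue measure dt/(2 pi). *)
Definition circ : set R := `[0, 2 * pi]%classic.

Definition Linfty (phi : R -> R[i]) : Prop :=
  measurable_fun circ (fun t => re (phi t)) /\
  measurable_fun circ (fun t => im (phi t)) /\
  exists M : R, {ae (@lebesgue_measure R), forall t, circ t -> cnormsq (phi t) <= M}.

(* Fourier coefficient hat phi(n) = (1/2pi) int_0^{2pi} phi(t) e^{-int} dt *)
Definition fourier (phi : R -> R[i]) (n : int) : R[i] :=
  Complex
   ((2 * pi)^-1 * Rintegral (@lebesgue_measure R) circ
      (fun t => re (phi t) * cos (n%:~R * t)
              + im (phi t) * sin (n%:~R * t)))
   ((2 * pi)^-1 * Rintegral (@lebesgue_measure R) circ
      (fun t => im (phi t) * cos (n%:~R * t)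
              - re (phi t) * sin (n%:~R * t))).

(* Toeplitz operator T_phi f = P_{H^2}(phi f), in Fourier coefficients:
   (T_phi f)(j) = sum_{k>=0} hat phi(j - k) hat f(k). *)
Definition toeplitz (phi : R -> R[i]) (f : nat -> R[i]) : nat -> R[i] :=
  fun j => csum (fun k => fourier phi (j%:Z - k%:Z) * f k).

(* M_z: multiplication by z = unilateral shift on Fourier coefficients *)
Definition Mz (f : nat -> R[i]) : nat -> R[i] :=
  fun n => if n is m.+1 then f m else 0.

Definition conjugation (C : (nat -> R[i]) -> (nat -> R[i])) : Prop :=
  (forall f, inH2 f -> inH2 (C f)) /\
  (forall (a : R[i]) f g, inH2 f -> inH2 g ->
      C (fun n => a * f n + g n) = (fun n => a^* * C f n + C g n)) /\
  (forall f, inH2 f -> C (C f) = f) /\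
  (forall f, inH2 f -> inner (C f) (C f) = inner f f).

Definition is_adjoint (A B : (nat -> R[i]) -> (nat -> R[i])) : Prop :=
  (forall f, inH2 f -> inH2 (B f)) /\
  (forall f g, inH2 f -> inH2 g -> inner (A f) g = inner f (B g)).

Definition C_symmetric (C T : (nat -> R[i]) -> (nat -> R[i])) : Prop :=
  exists Tstar, is_adjoint T Tstar /\
    forall f, inH2 f -> C (Tstar (C f)) = T f.

Definition S_toeplitz (S T : (nat -> R[i]) -> (nat -> R[i])) : Prop :=
  exists Sstar, is_adjoint S Sstar /\
    forall f, inH2 f -> Sstar (T (S f)) = T f.

End Hardy.

From mathcomp Require Import all_boot all_algebra.
From mathcomp Require Import all_classical all_reals all_analysis.
From mathcomp Require Import complex.
From mathcomp Require Import ring lra.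
Import GRing.Theory Num.Theory.
Import numFieldNormedType.Exports.
Local Open Scope ring_scope.
Local Open Scope classical_set_scope.

(* C is antiunitary, so S = C M_z C has adjoint C M_z^* C, and C-symmetry T_phi = C T_phi^* C
   gives S^* T_phi S = C M_z^* T_phi^* M_z C.  The Toeplitz identity M_z^* T_phi M_z = T_phi
   passes to adjoints, so M_z^* T_phi^* M_z = T_phi^* and S^* T_phi S = C T_phi^* C = T_phi. *)

Section RealSeries.
Variable R : realType.
Implicit Types (s w : R ^nat).

Lemma filter_shiftS s : [sequence s n.+1]_n @ \oo = s @ \oo.
Proof.
apply/seteqP; split.
- suff : s @ \oo --> [sequence s n.+1]_n @ \oo by [].
  by rewrite -cvg_shiftS.
- suff : [sequence s n.+1]_n @ \oo --> s @ \oo by [].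
  by rewrite cvg_shiftS.
Qed.

Lemma series_shiftS w : w 0%N = 0 -> series [sequence w n.+1]_n = [sequence series w n.+1]_n.
Proof. by move=> w0; apply/funext => n; rewrite /series /= big_nat_recl // w0 add0r. Qed.

Lemma cvg_series_single w j : (forall n, n != j -> w n = 0) -> series w @ \oo --> w j.
Proof.
move=> wj; apply: cvg_near_cst; near=> n.
have jn : (j < n)%N by near: n; exists j.+1.
rewrite seriesEord /= (bigD1 (Ordinal jn)) //= big1 ?addr0 // => k.
by rewrite -val_eqE; apply: wj.
Unshelve. all: by end_near.
Qed.

End RealSeries.

Section Hardy.
Context {R : realType}.
Implicit Types (a z w : R[i]) (f g h : nat -> R[i]).

Lemma cnormsq_ge0 z : 0 <= cnormsq z.
Proof. by case: z => x y; rewrite /cnormsq /re /im /=; nra. Qed.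

Lemma cnormsq0 : cnormsq (0 : R[i]) = 0.
Proof. by rewrite /cnormsq /re /im /= expr0n addr0. Qed.

Lemma cnormsq_conj z : cnormsq z^* = cnormsq z.
Proof. by case: z => x y; rewrite /cnormsq /re /im /= sqrrN. Qed.

Lemma cnormsqM a z : cnormsq (a * z) = cnormsq a * cnormsq z.
Proof. by case: a => x y; case: z => u v; rewrite /cnormsq /re /im /=; ring. Qed.

Lemma cnormsqD_le z w : cnormsq (z + w) <= 2 * cnormsq z + 2 * cnormsq w.
Proof.
case: z => x y; case: w => u v; rewrite /cnormsq /re /im /=.
by have := sqr_ge0 (x - u); have := sqr_ge0 (y - v); nra.
Qed.

Lemma cnormsq_polar a z w :
  cnormsq (a * w + z) = cnormsq z + cnormsq a * cnormsq w + 2 * re (a^* * (z * w^*)).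
Proof. by case: a => ? ?; case: z => ? ?; case: w => ? ?; rewrite /cnormsq /re /im /=; ring. Qed.

Lemma re_conjiM z : re ('i^* * z) = im z.
Proof. by case: z => x y; rewrite /re /im /=; ring. Qed.

Lemma re_conjNiM z : re ((- 'i)^* * z) = - im z.
Proof. by case: z => x y; rewrite /re /im /=; ring. Qed.

Lemma re_mul_conj z : re (z * z^*) = cnormsq z.
Proof. by case: z => x y; rewrite /cnormsq /re /im /=; ring. Qed.

Lemma csum_shift (u : nat -> R[i]) : u 0%N = 0 -> csum u = csum [sequence u n.+1]_n.
Proof.
move=> u0; rewrite /csum; congr Complex.
  by rewrite (@series_shiftS _ (fun n => re (u n))) ?u0 // filter_shiftS.
by rewrite (@series_shiftS _ (fun n => im (u n))) ?u0 // filter_shiftS.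
Qed.

Lemma csum_single (u : nat -> R[i]) j : (forall n, n != j -> u n = 0) -> csum u = u j.
Proof.
move=> uj.
have lim_single (v : R ^nat) : (forall n, n != j -> v n = 0) -> limn (series v) = v j.
  by move=> vj; apply/cvg_lim/cvg_series_single.
rewrite /csum !lim_single => [|n /uj /= ->//|n /uj /= ->//].
by case: (u j).
Qed.

Definition backshift f : nat -> R[i] := fun n => f n.+1.

Definition basis_vec j : nat -> R[i] := fun n => if n == j then 1 else 0.

Lemma Mz_basis_vec j : Mz (basis_vec j) = basis_vec j.+1.
Proof. by apply/funext => -[]. Qed.

Lemma inH2_Mz {f} : inH2 f -> inH2 (Mz f).
Proof. by move=> f2; rewrite /inH2 -(@filter_shiftS _ (series _)) -series_shiftS //= cnormsq0. Qed.

Lemma inH2_backshift {f} : inH2 f -> inH2 (backshift f).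
Proof.
rewrite /inH2 => f2.
have -> : series (fun n => cnormsq (backshift f n)) =
    [sequence series (fun n => cnormsq (f n)) n.+1 - cnormsq (f 0%N)]_n.
  by apply/funext => n; rewrite /series /= big_nat_recl // addrC addKr.
by apply: is_cvgB; [rewrite filter_shiftS | apply: is_cvg_cst].
Qed.

Lemma inH2_scale_add a {f g} : inH2 f -> inH2 g -> inH2 (fun n => a * f n + g n).
Proof.
rewrite /inH2 => f2 g2.
pose bound n := 2 * cnormsq a * cnormsq (f n) + 2 * cnormsq (g n).
apply: (@series_le_cvg R _ bound) => [n|n|n|].
- exact: cnormsq_ge0.
- by rewrite /bound; have := cnormsq_ge0 a; have := cnormsq_ge0 (f n); have := cnormsq_ge0 (g n); nra.
- by rewrite /bound -mulrA -cnormsqM cnormsqD_le.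
have -> : series bound = [sequence 2 * cnormsq a * series (fun n => cnormsq (f n)) n
                                   + 2 * series (fun n => cnormsq (g n)) n]_n.
  by apply/funext => n; rewrite /series /= big_split /= -!mulr_sumr.
by apply: is_cvgD; apply: is_cvgM => //; apply: is_cvg_cst.
Qed.

Lemma inH2_basis_vec j : inH2 (basis_vec j).
Proof.
apply/cvg_ex; exists (cnormsq (basis_vec j j)); apply: cvg_series_single => n /negbTE nj.
by rewrite /basis_vec nj cnormsq0.
Qed.

Lemma inner_basis_vecl j h : inner (basis_vec j) h = (h j)^*.
Proof.
rewrite /inner (@csum_single _ j) => [|n /negbTE nj]; first by rewrite /basis_vec eqxx mul1r.
by rewrite /basis_vec nj mul0r.
Qed.

Lemma inner_Mzr f g : inner f (Mz g) = inner (backshift f) g.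
Proof. by rewrite /inner csum_shift //= rmorph0 mulr0. Qed.

Lemma inner_Mzl f g : inner (Mz f) g = inner f (backshift g).
Proof. by rewrite /inner csum_shift //= mul0r. Qed.

Lemma is_adjoint_Mz : is_adjoint (@Mz R) backshift.
Proof. by split=> [f|f g _ _]; [exact: inH2_backshift | exact: inner_Mzl]. Qed.

Definition normsq f : R := limn (series (fun n => cnormsq (f n))).

Lemma re_inner_self f : re (inner f f) = normsq f.
Proof. by rewrite /inner /csum /normsq /=; under eq_fun do rewrite re_mul_conj. Qed.

Lemma polarization a {f g} : inH2 f -> inH2 g ->
  series (fun n => re (a^* * (f n * (g n)^*))) @ \oo -->
  2^-1 * (normsq (fun n => a * g n + f n) - normsq f - cnormsq a * normsq g).
Proof.
move=> f2 g2; have fg2 := inH2_scale_add a g2 f2.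
have -> : series (fun n => re (a^* * (f n * (g n)^*))) =
    [sequence 2^-1 * (series (fun n => cnormsq (a * g n + f n)) n
       - series (fun n => cnormsq (f n)) n - cnormsq a * series (fun n => cnormsq (g n)) n)]_n.
  apply/funext => n; rewrite /series /= mulr_sumr -!sumrB mulr_sumr; apply: eq_bigr => k _.
  by rewrite cnormsq_polar; field.
by apply: cvgM; [exact: cvg_cst | apply: cvgB; [apply: cvgB | apply: cvgM => //; exact: cvg_cst]].
Qed.

Section Conjugation.
Variable C : (nat -> R[i]) -> nat -> R[i].
Hypothesis conjC : conjugation C.

Lemma normsq_conjugation f : inH2 f -> normsq (C f) = normsq f.
Proof. by case: conjC => _ [_ [_ Ciso]] f2; rewrite -!re_inner_self Ciso. Qed.

Lemma inner_conjugation {f g} : inH2 f -> inH2 g -> inner (C f) (C g) = (inner f g)^*.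
Proof.
have [C2 [Clin _]] := conjC; move=> f2 g2.
(* P a u v = Re <u, a v>; polarization expresses it through norms, which C preserves,
   and C (a v) = a^* (C v). *)
pose P a u v := limn (series (fun n => re (a^* * (u n * (v n)^*)))).
have P_C a : P a (C f) (C g) = P a^* f g.
  rewrite /P (cvg_lim _ (polarization _ (C2 _ f2) (C2 _ g2))) //.
  rewrite (cvg_lim _ (polarization _ f2 g2)) //.
  have -> : (fun n => a * C g n + C f n) = C (fun n => a^* * g n + f n).
    by rewrite Clin // conjCK.
  by rewrite !normsq_conjugation ?cnormsq_conj //; apply: inH2_scale_add.
have reE u v : re (inner u v) = P 1 u v.
  by rewrite /P; under [in RHS]eq_fun do rewrite conjC1 mul1r.
have imE u v : im (inner u v) = P 'i u v.
  by rewrite /P; under [in RHS]eq_fun do rewrite re_conjiM.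
have imNE : P (- 'i) f g = - P 'i f g.
  rewrite /P; under eq_fun do rewrite re_conjNiM.
  under [in RHS]eq_fun do rewrite re_conjiM.
  rewrite -lim_seriesN //; apply: cvgP.
  by under eq_fun do rewrite -re_conjiM; exact: polarization.
suff : re (inner (C f) (C g)) = re (inner f g) /\ im (inner (C f) (C g)) = - im (inner f g).
  by rewrite /inner /csum /re /im /= => -[-> ->].
by rewrite !reE !imE !P_C conjC1 conjCi -imNE.
Qed.

Lemma is_adjoint_conjugate {A B} : (forall f, inH2 f -> inH2 (A f)) -> is_adjoint A B ->
  is_adjoint (fun f => C (A (C f))) (fun g => C (B (C g))).
Proof.
have [C2 [_ [Cinv _]]] := conjC; move=> A2 [B2 adjAB].
split=> [g g2 | f g f2 g2]; first by apply/C2/B2/C2.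
have Cf2 := C2 f f2; have Cg2 := C2 g g2.
rewrite -{1}(Cinv g g2) (inner_conjugation (A2 _ Cf2) Cg2) adjAB //.
by rewrite -(inner_conjugation Cf2 (B2 _ Cg2)) Cinv.
Qed.

End Conjugation.

Definition Mz_toeplitz (A : (nat -> R[i]) -> nat -> R[i]) : Prop :=
  forall f, inH2 f -> backshift (A (Mz f)) = A f.

Lemma toeplitz_Mz_toeplitz phi : Mz_toeplitz (toeplitz phi).
Proof.
move=> f _; apply/funext => j; rewrite /backshift /toeplitz csum_shift /=; last by rewrite mulr0.
congr csum; apply/funext => k; congr (fourier phi _ * _).
by rewrite -addn1 -[k.+1]addn1 !PoszD opprD addrACA subrr addr0.
Qed.

(* [inner_Mzr] holds without summability, so nothing is needed about [A (basis_vec _)]. *)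
Lemma Mz_toeplitz_adjoint {A B} : is_adjoint A B -> Mz_toeplitz A -> Mz_toeplitz B.
Proof.
move=> [_ adjAB] A_toep g g2; apply/funext => j; apply: (can_inj conjCK).
have basis2 := inH2_basis_vec.
rewrite /backshift -!inner_basis_vecl -(adjAB _ _ (basis2 _) (inH2_Mz g2)) inner_Mzr.
by rewrite -Mz_basis_vec A_toep // adjAB.
Qed.

End Hardy.

Theorem proposition4p5 (R : realType) (phi : R -> R[i])
    (C : (nat -> R[i]) -> (nat -> R[i])) :
  Linfty phi -> conjugation C ->
  C_symmetric C (toeplitz phi) ->
  S_toeplitz (fun f => C (Mz (C f))) (toeplitz phi).
Proof.
(* The shift identity of T_phi holds coefficientwise, so phi need not be bounded. *)
move=> _ conjC [Tstar [adjT symT]].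
have Tstar_toep : Mz_toeplitz Tstar := Mz_toeplitz_adjoint adjT (toeplitz_Mz_toeplitz phi).
have [C2 [_ [Cinv _]]] := conjC; have [Tstar2 _] := adjT.
exists (fun g => C (backshift (C g))); split.
  exact: (is_adjoint_conjugate _ conjC (@inH2_Mz R) is_adjoint_Mz).
move=> f f2; have Cf2 := C2 _ f2; have MzCf2 := inH2_Mz Cf2.
have TstarMzCf2 := Tstar2 _ MzCf2.
by rewrite -(symT _ (C2 _ MzCf2)) !Cinv // Tstar_toep // symT.
Qed.
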